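(* Let $R$ be a ring and $G$ a group. If the group ring $RG$ is a DT ring, then $R$ is a DT ring.
   Context: All rings are associative with identity; $U(R)$ is the group of units. $\Delta(R)=\{x\in R: x+u\in U(R)\text{ for all }u\in U(R)\}$. $\mathrm{Tr}(R)=\{x\in R: x^3=x\}$. A ring $R$ is a DT ring if every $r\in R$ can be written $r=e+d$ with $e\in\mathrm{Tr}(R)$ and $d\in\Delta(R)$. $RG$ denotes the group ring. *)

From HB Require Import structures.
From mathcomp Require Import all_boot all_algebra.
From mathcomp Require Import boolp classical_sets cardinality fsbigop.

Set Implicit Arguments.
Unset Strict Implicit.
Unset Printing Implicit Defensive.

Import GRing.Theory.
Local Open Scope ring_scope.
Local Open Scope classical_set_scope.

(* For an honest ring type
   [inR] is the trivial predicate; for the group ring it is "finitely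
   supported".                                                          *)
Section DTops.
Variables (T : Type) (inR : T -> Prop) (add mul : T -> T -> T) (one : T).

Definition unit_ops (u : T) : Prop :=
  exists v, inR v /\ mul u v = one /\ mul v u = one.

Definition Delta_ops (x : T) : Prop :=
  inR x /\ forall u, inR u -> unit_ops u -> unit_ops (add x u).

Definition Tr_ops (x : T) : Prop := inR x /\ mul x (mul x x) = x.

Definition DT_ops : Prop :=
  forall r, inR r -> exists e d, Tr_ops e /\ Delta_ops d /\ r = add e d.
End DTops.

(* A ring R (associative, with identity; the zero ring is allowed). *)
Definition DT_ring (R : pzRingType) : Prop :=
  @DT_ops R (fun _ => True) +%R *%R 1.

Section GroupRing.
Variables (R : pzRingType) (G : groupType).

Definition gr_fin_supp (f : G -> R) : Prop := finite_set [set g | f g != 0].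

Definition gr_add (f h : G -> R) : G -> R := fun g => f g + h g.

Definition gr_mul (f h : G -> R) : G -> R :=
  fun g => \sum_(x \in [set: G]) f x * h (monoid.mul (monoid.inv x) g).

Definition gr_one : G -> R := fun g => if g == monoid.one then 1 else 0.

Definition DT_group_ring : Prop :=
  @DT_ops (G -> R) gr_fin_supp gr_add gr_mul gr_one.
End GroupRing.

(** The augmentation [RG -> R], summing all coefficients, is a surjective
    ring homomorphism, so it maps tripotents to tripotents. It also carries
    [Delta(RG)] into [Delta(R)]: every unit [u] of [R] is the image of the
    unit [u·1] of [RG], since the embedding of [R] as constant coefficients
    at the identity is unital and multiplicative. Hence the image of a DT
    decomposition of [r·1] in [RG] is a DT decomposition of [r] in [R]. *)

From HB Require Import structures.
From mathcomp Require Import all_boot all_algebra.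
From mathcomp Require Import boolp classical_sets cardinality fsbigop.
From mathcomp Require Import finmap.

Set Implicit Arguments.
Unset Strict Implicit.
Unset Printing Implicit Defensive.
Import GRing.Theory.

Local Open Scope ring_scope.
Local Open Scope classical_set_scope.

Section DTRetract.
Variables (T : Type) (inT : T -> Prop) (addT mulT : T -> T -> T) (oneT : T).
Variables (S : Type) (inS : S -> Prop) (addS mulS : S -> S -> S) (oneS : S).
Variables (phi : T -> S) (iota : S -> T).

Hypothesis addT_in : forall x y, inT x -> inT y -> inT (addT x y).
Hypothesis mulT_in : forall x y, inT x -> inT y -> inT (mulT x y).
Hypothesis phi_in : forall x, inT x -> inS (phi x).
Hypothesis phi_add :
  forall x y, inT x -> inT y -> phi (addT x y) = addS (phi x) (phi y).
Hypothesis phi_mul :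
  forall x y, inT x -> inT y -> phi (mulT x y) = mulS (phi x) (phi y).
Hypothesis phi_one : phi oneT = oneS.
Hypothesis iota_in : forall s, inS s -> inT (iota s).
Hypothesis phiK : forall s, phi (iota s) = s.
Hypothesis iota_mul :
  forall a b, inS a -> inS b -> mulT (iota a) (iota b) = iota (mulS a b).
Hypothesis iota_one : iota oneS = oneT.

Lemma unit_ops_section u :
  inS u -> unit_ops inS mulS oneS u -> unit_ops inT mulT oneT (iota u).
Proof.
move=> Su [v [Sv [uv vu]]]; exists (iota v); split; first exact: iota_in.
by rewrite !iota_mul // uv vu iota_one.
Qed.

Lemma unit_ops_retract x :
  inT x -> unit_ops inT mulT oneT x -> unit_ops inS mulS oneS (phi x).
Proof.
move=> Tx [y [Ty [xy yx]]]; exists (phi y); split; first exact: phi_in.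
by rewrite -!phi_mul // xy yx phi_one.
Qed.

Lemma Tr_ops_retract e : Tr_ops inT mulT e -> Tr_ops inS mulS (phi e).
Proof.
move=> [Te eT]; split; first exact: phi_in.
by rewrite -phi_mul // -phi_mul ?eT //; apply: mulT_in.
Qed.

Lemma Delta_ops_retract d :
  Delta_ops inT addT mulT oneT d -> Delta_ops inS addS mulS oneS (phi d).
Proof.
move=> [Td dD]; split=> [|u Su uU]; first exact: phi_in.
have Tu := iota_in Su.
rewrite -[u]phiK -phi_add //; apply: unit_ops_retract; first exact: addT_in.
exact/dD/unit_ops_section.
Qed.

Lemma DT_ops_retract :
  DT_ops inT addT mulT oneT -> DT_ops inS addS mulS oneS.
Proof.
move=> DT_T s Ss; have [e [d [eTr [dD se]]]] := DT_T _ (iota_in Ss).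
exists (phi e), (phi d); split; first exact: Tr_ops_retract.
split; first exact: Delta_ops_retract.
by rewrite -phi_add -?se ?phiK; [| case: eTr | case: dD].
Qed.
End DTRetract.


Section GroupRingAugmentation.
Variables (R : pzRingType) (G : groupType).
Implicit Types (f h : G -> R) (a b : R).

Local Notation supp f := [set g | f g != 0].

Definition gr_aug f : R := \sum_(x \in [set: G]) f x.

Definition gr_const a : G -> R := fun g => if g == monoid.one then a else 0.

Lemma gr_fin_supp_const a : gr_fin_supp (gr_const a).
Proof.
apply: (sub_finite_set (B := [set monoid.one])); last exact: finite_set1.
by move=> g /=; rewrite /gr_const; case: ifP => [/eqP | _] //; rewrite eqxx.
Qed.

Lemma gr_aug_fset f (S : set G) : finite_set S ->
  (forall g, ~ S g -> f g = 0) -> gr_aug f = \sum_(x <- fset_set S) f x.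
Proof.
move=> fS fS0; apply: fsbigTE => g; rewrite in_fset_set // => Sg; apply: fS0.
by move=> /mem_set; apply/negP.
Qed.

Lemma gr_aug_supp1 f : (forall g, g != monoid.one -> f g = 0) ->
  gr_aug f = f monoid.one.
Proof.
move=> f0; rewrite /gr_aug (fsbigTE [fset monoid.one]%fset) ?big_seq_fset1 //.
by move=> g; rewrite inE => /f0.
Qed.

Lemma gr_aug_const a : gr_aug (gr_const a) = a.
Proof. by rewrite gr_aug_supp1 /gr_const ?eqxx // => g /negbTE ->. Qed.

Lemma gr_mul_const a b :
  gr_mul (gr_const a) (gr_const b) = gr_const (a * b).
Proof.
apply: funext => g; rewrite /gr_mul -/(gr_aug _) gr_aug_supp1; last first.
  by move=> x /negbTE x1; rewrite /gr_const x1 mul0r.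
rewrite /gr_const eqxx monoid.invg1 monoid.mul1g.
by case: eqP; rewrite ?mulr0.
Qed.

Lemma notin_supp f g : ~ supp f g -> f g = 0.
Proof. by move/negP/negPn/eqP. Qed.

Lemma gr_fin_supp_add f h :
  gr_fin_supp f -> gr_fin_supp h -> gr_fin_supp (gr_add f h).
Proof.
move=> ff fh; apply: (sub_finite_set (B := supp f `|` supp h)).
  move=> g /=; rewrite /gr_add => fhg; apply: contrapT.
  move=> /not_orP[/notin_supp f0 /notin_supp h0].
  by move/eqP: fhg; rewrite f0 h0 addr0.
by rewrite finite_setU.
Qed.

Lemma gr_aug_add f h : gr_fin_supp f -> gr_fin_supp h ->
  gr_aug (gr_add f h) = gr_aug f + gr_aug h.
Proof.
move=> ff fh; have fU : finite_set (supp f `|` supp h) by rewrite finite_setU.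
rewrite (gr_aug_fset fU); last first.
  move=> g /not_orP[/notin_supp f0 /notin_supp h0].
  by rewrite /gr_add f0 h0 addr0.
rewrite big_split /= -(gr_aug_fset (f := f) fU); last first.
  by move=> g /not_orP[/notin_supp].
by rewrite -(gr_aug_fset (f := h) fU) // => g /not_orP[_ /notin_supp].
Qed.

Definition setMg (A B : set G) : set G :=
  [set monoid.mul p.1 p.2 | p in A `*` B].

Lemma finite_setMg A B :
  finite_set A -> finite_set B -> finite_set (setMg A B).
Proof. by move=> fA fB; apply/finite_image/finite_setX. Qed.

Lemma gr_mul_out_supp f h g :
  ~ setMg (supp f) (supp h) g -> gr_mul f h g = 0.
Proof.
move=> Ng; rewrite /gr_mul fsbig1 // => x _.
have [->|fx] := eqVneq (f x) 0; first by rewrite mul0r.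
have [->|hx] := eqVneq (h (monoid.mul (monoid.inv x) g)) 0.
  by rewrite mulr0.
case: Ng; exists (x, monoid.mul (monoid.inv x) g) => //=.
by rewrite monoid.mulVKg.
Qed.

Lemma gr_fin_supp_mul f h :
  gr_fin_supp f -> gr_fin_supp h -> gr_fin_supp (gr_mul f h).
Proof.
move=> ff fh; apply: sub_finite_set (finite_setMg ff fh) => g /= fhg.
by apply: contrapT => /gr_mul_out_supp; apply/eqP.
Qed.

Lemma gr_aug_mul f h : gr_fin_supp f -> gr_fin_supp h ->
  gr_aug (gr_mul f h) = gr_aug f * gr_aug h.
Proof.
move=> ff fh; have fAB := finite_setMg ff fh.
rewrite (gr_aug_fset fAB); last by move=> g; apply: gr_mul_out_supp.
have mulE g : gr_mul f h g =
    \sum_(x <- fset_set (supp f)) f x * h (monoid.mul (monoid.inv x) g).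
  rewrite /gr_mul -/(gr_aug _) (gr_aug_fset ff) // => x /notin_supp ->.
  by rewrite mul0r.
under eq_bigr do rewrite mulE.
rewrite exchange_big /= (gr_aug_fset ff); last by move=> g /notin_supp.
rewrite big_distrl /=; apply: eq_big_seq => x.
rewrite in_fset_set // mem_setE => fx; rewrite -big_distrr /=; congr (_ * _).
rewrite -(gr_aug_fset (f := fun g => h (monoid.mul (monoid.inv x) g)) fAB).
  rewrite /gr_aug (reindex_fsbigT (monoid.mul (monoid.inv x)) h) //.
  by exists (monoid.mul x) => y; [exact: monoid.mulVKg | exact: monoid.mulKg].
move=> g ABg; apply: notin_supp => hg; apply: ABg.
by exists (x, monoid.mul (monoid.inv x) g) => //=; rewrite monoid.mulVKg.
Qed.

End GroupRingAugmentation.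

Theorem lemma3p6 (R : pzRingType) (G : groupType) :
  DT_group_ring R G -> DT_ring R.
Proof.
apply: (@DT_ops_retract _ _ _ _ _ _ _ _ _ _ (@gr_aug R G) (@gr_const R G)).
- exact: gr_fin_supp_add.
- exact: gr_fin_supp_mul.
- by [].
- exact: gr_aug_add.
- exact: gr_aug_mul.
- exact: gr_aug_const.
- move=> s _; exact: gr_fin_supp_const.
- exact: gr_aug_const.
- by move=> a b _ _; rewrite gr_mul_const.
- by [].
Qed.
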